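(* Let $\mathscr{G}$ be a class of topological groups and let $G\in\mathscr{G}$ be Abelian. Then for every space $X$, $C_p(X,G)$ is topologically isomorphic to $\mathrm{Chom}_p(F_\mathscr{G}(X),G)$.
   Context: All spaces are Tychonoff and non-empty; topological groups are Hausdorff. $C_p(X,G)$ is the group of continuous maps $X\to G$ with pointwise operations and the topology of pointwise convergence. For topological groups $K,G$ with $G$ Abelian, $\mathrm{Chom}_p(K,G)$ is the group of continuous homomorphisms $K\to G$ as a subspace of $C_p(K,G)$. $\overline{\mathscr{G}}$ is the smallest class of topological groups containing $\mathscr{G}$ closed under arbitrary products and subgroups. The free object $F_\mathscr{G}(X)$ is a topological group in $\overline{\mathscr{G}}$ together with a continuous map $\varphi:X\to F_\mathscr{G}(X)$ such that $\varphi(X)$ algebraically generates $F_\mathscr{G}(X)$ and for every $K\in\overline{\mathscr{G}}$ and continuous $f:X\to K$ there is a (unique) continuous homomorphism $g:F_\mathscr{G}(X)\to K$ with $f=g\circ\varphi$ (equivalently, it is the reflection in $\overline{\mathscr{G}}$ of Markov's free topological group $F(X)$); it is unique up to topological isomorphism. *)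

From HB Require Import structures.
From mathcomp Require Import all_boot all_order all_algebra.
From mathcomp Require Import all_classical all_reals all_analysis.
From mathcomp Require Import Rstruct Rstruct_topology.

Set Implicit Arguments.
Unset Strict Implicit.
Unset Printing Implicit Defensive.

Local Open Scope classical_set_scope.

(** Hausdorff topological groups (not necessarily abelian), written
    multiplicatively.  The library only has abelian topological
    (Z-)modules, so the structure is given as a record. *)
Record topGroup := TopGroup {
  tg_car :> topologicalType;
  tg_mul : tg_car -> tg_car -> tg_car;
  tg_one : tg_car;
  tg_inv : tg_car -> tg_car;
  tg_mulA : forall x y z, tg_mul x (tg_mul y z) = tg_mul (tg_mul x y) z;
  tg_mul1g : forall x, tg_mul tg_one x = x;
  tg_mulVg : forall x, tg_mul (tg_inv x) x = tg_one;
  tg_mul_cont : continuous (fun p : tg_car * tg_car => tg_mul p.1 p.2);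
  tg_inv_cont : continuous tg_inv;
  tg_hausdorff : hausdorff_space tg_car }.

Arguments tg_mul {t}.
Arguments tg_one {t}.
Arguments tg_inv {t}.

Definition tychonoff_space (X : topologicalType) :=
  hausdorff_space X /\ completely_regular_space X.

Definition abelian_tg (G : topGroup) := forall x y : G, tg_mul x y = tg_mul y x.

Definition is_hom (K H : topGroup) (f : K -> H) :=
  forall x y, f (tg_mul x y) = tg_mul (f x) (f y).

Definition cont_hom (K H : topGroup) (f : K -> H) := continuous f /\ is_hom f.

(** [f] is a topological isomorphism of [K] onto a subgroup of [H]
    (with the subspace topology): an injective continuous homomorphism such
    that [K] carries the initial topology induced by [f]. *)
Definition top_embedding (K H : topGroup) (f : K -> H) :=
  [/\ cont_hom f, injective f &
      forall U : set K, open U -> exists V : set H, open V /\ f @^-1` V = U].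

Definition homeomorphism_tg (S T : topologicalType) (f : S -> T) :=
  exists g : T -> S, [/\ cancel f g, cancel g f, continuous f & continuous g].

(** [K] together with the homomorphisms [p i : K -> H i] is (a copy of) the
    product group of the family [H] with the Tychonoff product topology:
    the induced map [K -> prod_i H i] is a group isomorphism (the group law
    of the product being pointwise, it is a homomorphism iff each [p i] is)
    and a homeomorphism_tg onto [prod_topology]. *)
Definition is_product (I : Type) (H : I -> topGroup) (K : topGroup)
  (p : forall i, K -> H i) :=
  (forall i, is_hom (p i)) /\
  homeomorphism_tg ((fun x i => p i x) : K -> prod_topology (fun i => tg_car (H i))).

Definition subgroup_closed (P : topGroup -> Prop) :=
  forall (K H : topGroup) (f : K -> H), P H -> top_embedding f -> P K.

Definition product_closed (P : topGroup -> Prop) :=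
  forall (I : Type) (H : I -> topGroup) (K : topGroup) (p : forall i, K -> H i),
    (forall i, P (H i)) -> is_product p -> P K.

Definition gclosure (C : topGroup -> Prop) (K : topGroup) :=
  forall P : topGroup -> Prop,
    (forall H, C H -> P H) -> subgroup_closed P -> product_closed P -> P K.

Definition tg_generates (F : topGroup) (S : set F) :=
  forall A : set F,
    S `<=` A -> A tg_one ->
    (forall x y, A x -> A y -> A (tg_mul x y)) ->
    (forall x, A x -> A (tg_inv x)) -> A = setT.

Definition is_free_object (C : topGroup -> Prop) (X : topologicalType)
  (F : topGroup) (phi : X -> F) :=
  [/\ gclosure C F, continuous phi, tg_generates (range phi) &
      forall (K : topGroup) (f : X -> K), gclosure C K -> continuous f ->
        exists g : F -> K, [/\ cont_hom g, f = g \o phi &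
          forall g' : F -> K, cont_hom g' -> f = g' \o phi -> g' = g]].

Definition tg_pmul (T : Type) (G : topGroup) (f g : T -> G) : T -> G :=
  fun t => tg_mul (f t) (g t).

Definition Cp_set (X : topologicalType) (G : topGroup) : set {ptws X -> tg_car G} :=
  [set f | continuous (f : X -> G)].

Definition Chomp_set (K G : topGroup) : set {ptws tg_car K -> tg_car G} :=
  [set g | cont_hom (g : K -> G)].

Definition top_isomorphic_fun_groups (S T : Type) (G : topGroup)
  (A : set {ptws S -> tg_car G}) (B : set {ptws T -> tg_car G}) :=
  exists (Phi : {ptws S -> tg_car G} -> {ptws T -> tg_car G})
         (Psi : {ptws T -> tg_car G} -> {ptws S -> tg_car G}),
  [/\ (forall f, A f -> B (Phi f)),
      (forall g, B g -> A (Psi g)),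
      (forall f, A f -> Psi (Phi f) = f) &
      (forall g, B g -> Phi (Psi g) = g)] /\
  [/\ (forall f1 f2, A f1 -> A f2 -> Phi (tg_pmul f1 f2) = tg_pmul (Phi f1) (Phi f2)),
      {within A, continuous Phi} &
      {within B, continuous Psi}].

Arguments Cp_set : clear implicits.
Arguments Chomp_set : clear implicits.

From mathcomp Require Import all_boot all_order all_algebra.
From mathcomp Require Import all_classical all_reals all_analysis.

(* Every continuous [f : X -> G] extends uniquely to a continuous homomorphism
   [F -> G], since [G] lies in the closure of the class; restriction along [phi]
   is the inverse map, so the two groups are in bijection.  Restriction is
   pointwise continuous because each coordinate of [f \o phi] is a coordinate
   of [f].  For the extension, the set of [z : F] at which [f |-> f^ z] is
   continuous is a subgroup containing [phi X], hence everything; pointwise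
   products are preserved because [G] is abelian, so the product of two
   homomorphisms is again one. *)

Set Implicit Arguments.
Unset Strict Implicit.

Local Open Scope classical_set_scope.

Lemma ptws_continuous (S : topologicalType) (T : Type) (G : topologicalType)
  (h : S -> {ptws T -> G}) : (forall t, continuous (fun s => h s t)) -> continuous h.
Proof.
move=> hc s; apply/cvg_sup => t A /=.
rewrite nbhsE => -[B [[V oV <-] Bs] BA].
have := hc t s V (open_nbhs_nbhs (conj oV Bs)).
rewrite nbhs_simpl /= nbhsE => -[D oD DV].
by rewrite nbhs_simpl; exists D => // r /DV; apply: BA.
Qed.

Lemma ptws_eval_continuous (T : Type) (G : topologicalType) (t : T) :
  continuous (fun f : {ptws T -> G} => f t).
Proof.
move=> f A /= Aft.
have /cvg_sup/(_ t) : nbhs f --> (f : {ptws T -> G}) by apply: cvg_id.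
by apply; exact: (@initial_continuous _ G (fun g : T -> G => g t) f A Aft).
Qed.

Lemma ptws_comp_continuous (S T : Type) (G : topologicalType) (h : S -> T) :
  continuous (fun f : {ptws T -> G} => (f \o h : {ptws S -> G})).
Proof. by apply: ptws_continuous => s; exact: ptws_eval_continuous. Qed.

Section TopGroupTheory.
Variable G : topGroup.
Implicit Types x y : G.

Lemma tg_mulgV x : tg_mul x (tg_inv x) = tg_one.
Proof.
have -> : tg_mul x (tg_inv x) =
    tg_mul (tg_mul (tg_inv (tg_inv x)) (tg_inv x)) (tg_mul x (tg_inv x)).
  by rewrite tg_mulVg tg_mul1g.
by rewrite -tg_mulA (tg_mulA (tg_inv x) x) tg_mulVg tg_mul1g tg_mulVg.
Qed.

Lemma tg_mulg1 x : tg_mul x tg_one = x.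
Proof. by rewrite -(tg_mulVg x) tg_mulA tg_mulgV tg_mul1g. Qed.

Lemma tg_inv_uniq x y : tg_mul x y = tg_one -> x = tg_inv y.
Proof. by move=> xy1; rewrite -[x]tg_mulg1 -(tg_mulgV y) tg_mulA xy1 tg_mul1g. Qed.

Lemma tg_mul_continuous (S : topologicalType) (a b : S -> G) :
  continuous a -> continuous b -> continuous (fun s => tg_mul (a s) (b s)).
Proof.
move=> ca cb s; apply: continuous2_cvg; last 2 first; [exact: ca | exact: cb |].
exact: (@tg_mul_cont G (a s, b s)).
Qed.

End TopGroupTheory.

Section Homomorphisms.
Variables H G : topGroup.

Lemma hom1 (g : H -> G) : is_hom g -> g tg_one = tg_one.
Proof.
move=> hg; have g11 : g tg_one = tg_mul (g tg_one) (g tg_one) by rewrite -hg tg_mul1g.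
by rewrite -[LHS]tg_mul1g -(tg_mulVg (g tg_one)) -tg_mulA -g11.
Qed.

Lemma homV (g : H -> G) (x : H) : is_hom g -> g (tg_inv x) = tg_inv (g x).
Proof. by move=> hg; apply: tg_inv_uniq; rewrite -hg tg_mulVg hom1. Qed.

Lemma cont_hom_pmul (g1 g2 : H -> G) : abelian_tg G ->
  cont_hom g1 -> cont_hom g2 -> cont_hom (tg_pmul g1 g2).
Proof.
move=> Gab [c1 h1] [c2 h2]; split; first exact: tg_mul_continuous.
move=> x y; rewrite /tg_pmul h1 h2 -!tg_mulA; congr (tg_mul _ _).
by rewrite !tg_mulA (Gab (g2 x)).
Qed.

Lemma hom_family_continuous (S : topologicalType) (h : S -> H -> G) (A : set H) :
  tg_generates A -> (forall s, is_hom (h s)) ->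
  (forall a, A a -> continuous (fun s => h s a)) ->
  forall z, continuous (fun s => h s z).
Proof.
move=> genA hom_h contA.
suff Zfull : [set z | continuous (fun s => h s z)] = setT.
  by move=> z; have : [set z | continuous (fun s => h s z)] z by rewrite Zfull.
apply: genA => [a /contA //| | z1 z2 c1 c2 | z1 c1] /=.
- have -> : (fun s => h s tg_one) = fun=> tg_one by apply: funext => s; rewrite hom1.
  exact: cst_continuous.
- have -> : (fun s => h s (tg_mul z1 z2)) = fun s => tg_mul (h s z1) (h s z2).
    by apply: funext => s; rewrite hom_h.
  exact: tg_mul_continuous.
- have -> : (fun s => h s (tg_inv z1)) = fun s => tg_inv (h s z1).
    by apply: funext => s; rewrite homV.
  by move=> s; apply: continuous_comp; [exact: c1 | exact: tg_inv_cont].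
Qed.

End Homomorphisms.

Lemma gclosure_base (C : topGroup -> Prop) (G : topGroup) : C G -> gclosure C G.
Proof. by move=> CG P CP _ _; exact: CP. Qed.

Section FreeExtension.
Variables (C : topGroup -> Prop) (X : topologicalType) (F G : topGroup) (phi : X -> F).
Hypotheses (Ffree : is_free_object C phi) (GC : gclosure C G).

Lemma cont_hom_comp_free (g : F -> G) : cont_hom g -> continuous (g \o phi).
Proof.
by case: Ffree => _ phic _ _ [gc _] x; apply: continuous_comp; [exact: phic | exact: gc].
Qed.

Lemma free_ext_uniq (g1 g2 : F -> G) : cont_hom g1 -> cont_hom g2 ->
  g1 \o phi = g2 \o phi -> g1 = g2.
Proof.
move=> h1 h2 e; case: Ffree => _ _ _ univ.
have [g [_ _ uniq_g]] := univ G _ GC (cont_hom_comp_free h1).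
by rewrite (uniq_g g1 h1 erefl) (uniq_g g2 h2 e).
Qed.

(* Discontinuous maps are sent to the trivial homomorphism, so every [L f]
   is a continuous homomorphism. *)
Lemma free_ext_exists : exists L : (X -> G) -> F -> G,
  (forall f, cont_hom (L f)) /\ (forall f, continuous f -> L f \o phi = f).
Proof.
have ext f : exists g : F -> G, cont_hom g /\ (continuous f -> g \o phi = f).
  have [cf|ncf] := pselect (continuous f).
    by case: Ffree => _ _ _ univ; have [g [hg -> _]] := univ G f GC cf; exists g.
  exists (fun=> tg_one); split=> [|/ncf//]; split; first exact: cst_continuous.
  by move=> x y; rewrite tg_mul1g.
have [L HL] := choice ext.
by exists L; split=> f; have [] := HL f.
Qed.

End FreeExtension.

Theorem theorem9p10 (C : topGroup -> Prop) (G : topGroup)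
  (HG : C G) (Gab : abelian_tg G)
  (X : topologicalType) (Xtych : tychonoff_space X) (Xne : inhabited X)
  (F : topGroup) (phi : X -> F) (Ffree : is_free_object C phi) :
  top_isomorphic_fun_groups (Cp_set X G) (Chomp_set F G).
Proof.
have GC := gclosure_base HG.
have [L [homL extL]] := free_ext_exists Ffree GC.
have uniq := free_ext_uniq Ffree GC.
exists (L : {ptws X -> G} -> {ptws F -> G}),
  (fun g : {ptws F -> G} => (g \o phi : {ptws X -> G})).
split; split.
- by move=> f _; exact: homL.
- by move=> g hg; exact: (cont_hom_comp_free Ffree hg).
- by move=> f; exact: extL.
- by move=> g hg; apply: uniq => //; rewrite extL //; exact: (cont_hom_comp_free Ffree hg).
- move=> f1 f2 c1 c2; apply: uniq; [exact: homL | exact: cont_hom_pmul |].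
  rewrite extL; last exact: tg_mul_continuous.
  have e1 := extL _ c1; have e2 := extL _ c2.
  by apply: funext => x; rewrite /= /tg_pmul -[in LHS]e1 -[in LHS]e2.
- apply: ptws_continuous; apply: (hom_family_continuous (A := range phi)).
  + by case: Ffree.
  + by move=> s; case: (homL s).
  + move=> _ [x _ <-].
    apply: (@subspace_eq_continuous _ _ _ (fun s : subspace (Cp_set X G) => (s : X -> G) x)).
      move=> s /set_mem cs; rewrite /from_subspace.
      by have /(congr1 (fun h => h x)) <- := extL _ cs.
    by apply: continuous_subspaceT; exact: ptws_eval_continuous.
- exact/continuous_subspaceT/ptws_comp_continuous.
Qed.
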